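(* Let $F\colon\Omega\to\Omega$ be a piecewise translation in $\mathbb{R}^d$ with $m=d+1$ branches whose translation vectors $v_0,\dots,v_d$ have the property that any $d$ of them are linearly independent. Then there is a unique tuple $(\alpha_0,\dots,\alpha_d)\in\mathbb{R}^{d+1}$ with $\sum_{i=0}^d\alpha_iv_i=0$ and $\sum_{i=0}^d\alpha_i=1$, and it satisfies $\alpha_i>0$ for all $i$.
   Context: A region is a compact subset of $\mathbb{R}^d$ which equals the closure of its interior. A piecewise translation with $m$ branches: $\Omega\subset\mathbb{R}^d$ is a region, $\Omega=P_0\cup\dots\cup P_{m-1}$ with each $P_i$ a region, distinct $P_i$ intersecting only in boundaries, $\mathrm{Leb}(\partial P_i)=0$; vectors $v_i$ satisfy $x+v_i\in\Omega$ for $x\in P_i$; $i(x)$ is an index with $x\in P_{i(x)}$ (boundary ambiguity resolved by a fixed measurable rule), and $F(x)=x+v_{i(x)}$. *)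

From Stdlib Require Import Reals.
From mathcomp Require Import ssreflect ssrbool ssrnat seq fintype.

Local Open Scope R_scope.

Definition Vec (d : nat) := 'I_d -> R.

Definition vadd {d : nat} (x y : Vec d) : Vec d := fun k => x k + y k.

(* Open sup-norm ball (same topology as Euclidean). *)
Definition ball {d : nat} (x : Vec d) (r : R) (y : Vec d) : Prop :=
  forall k : 'I_d, Rabs (y k - x k) < r.

Definition interior {d : nat} (S : Vec d -> Prop) (x : Vec d) : Prop :=
  exists r, 0 < r /\ forall y, ball x r y -> S y.

Definition closure {d : nat} (S : Vec d -> Prop) (x : Vec d) : Prop :=
  forall r, 0 < r -> exists y, ball x r y /\ S y.

Definition boundary {d : nat} (S : Vec d -> Prop) (x : Vec d) : Prop :=
  closure S x /\ ~ interior S x.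

Definition is_closed {d : nat} (S : Vec d -> Prop) : Prop :=
  forall x, closure S x -> S x.

Definition is_bounded {d : nat} (S : Vec d -> Prop) : Prop :=
  exists M, forall x, S x -> forall k : 'I_d, Rabs (x k) <= M.

(* Compact subsets of R^d (Heine-Borel). *)
Definition is_compact {d : nat} (S : Vec d -> Prop) : Prop :=
  is_closed S /\ is_bounded S.

Definition region {d : nat} (S : Vec d -> Prop) : Prop :=
  is_compact S /\ forall x, S x <-> closure (interior S) x.

Definition box_vol {d : nat} (a b : Vec d) : R :=
  foldr Rmult 1 (map (fun k => b k - a k) (enum 'I_d)).

Definition leb_null {d : nat} (S : Vec d -> Prop) : Prop :=
  forall eps, 0 < eps ->
    exists a b : nat -> Vec d,
      (forall n (k : 'I_d), a n k <= b n k) /\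
      (forall x, S x -> exists n, forall k : 'I_d, a n k <= x k <= b n k) /\
      (forall N, sum_f_R0 (fun n => box_vol (a n) (b n)) N <= eps).

(* Piecewise translation with m branches P 0 .. P (m-1), vectors v i,
   and branch-index rule idx (F x = x + v (idx x)). *)
Definition piecewise_translation (d m : nat) (Omega : Vec d -> Prop)
    (P : nat -> Vec d -> Prop) (v : nat -> Vec d) (idx : Vec d -> nat) : Prop :=
  region Omega /\
  (forall i, (i < m)%nat -> region (P i)) /\
  (forall x, Omega x <-> exists i, (i < m)%nat /\ P i x) /\
  (forall i j x, (i < m)%nat -> (j < m)%nat -> i <> j -> P i x -> P j x ->
       boundary (P i) x /\ boundary (P j) x) /\
  (forall i, (i < m)%nat -> leb_null (boundary (P i))) /\
  (forall i x, (i < m)%nat -> P i x -> Omega (vadd x (v i))) /\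
  (forall x, Omega x -> (idx x < m)%nat /\ P (idx x) x).

Definition any_d_independent (d : nat) (v : nat -> Vec d) : Prop :=
  forall j, (j <= d)%nat ->
    forall c : nat -> R,
      (forall k : 'I_d,
         sum_f_R0 (fun i => if Nat.eqb i j then 0 else c i * v i k) d = 0) ->
      forall i, (i <= d)%nat -> i <> j -> c i = 0.

Definition affine_relation (d : nat) (v : nat -> Vec d) (a : nat -> R) : Prop :=
  (forall k : 'I_d, sum_f_R0 (fun i => a i * v i k) d = 0) /\
  sum_f_R0 a d = 1.

(* A linear functional w that is positive on every v_i would grow by at least
   min_i w(v_i) > 0 at each step of an orbit of F, which is impossible in the
   bounded set Omega.  Since any d of the v_i are free, the relations
   sum_i c_i v_i = 0 form a line, spanned by some c with c_0 = -1; this gives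
   existence and uniqueness of the normalised relation a = c / (sum_i c_i).
   For positivity fix j and choose w with w(v_i) = 1 for all i <> j.  Applying
   w to the relation gives sum_i c_i = c_j (1 - w(v_j)), and w(v_j) <= 0 by the
   first remark, so a_j = 1 / (1 - w(v_j)) > 0. *)

From Stdlib Require Import Reals.
From mathcomp Require Import all_boot all_order all_algebra.
From mathcomp Require Import Rstruct ring lra zify.
Import Order.TTheory GRing.Theory Num.Theory.
Local Open Scope ring_scope.

Definition dotv {d : nat} (w x : Vec d) : R := \sum_(k < d) w k * x k.

Lemma dotv_vadd {d : nat} (w x y : Vec d) : dotv w (vadd x y) = dotv w x + dotv w y.
Proof. by rewrite /dotv -big_split; apply: eq_bigr => k _; rewrite /vadd mulrDr. Qed.

Lemma bounded_dotv_ub {d : nat} {S : Vec d -> Prop} (w : Vec d) :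
  is_bounded S -> exists C, forall x, S x -> dotv w x <= C.
Proof.
move=> [M HM]; exists (\sum_(k < d) `|w k| * M) => x Sx.
rewrite /dotv; apply: ler_sum => k _.
apply: le_trans (ler_norm _) _; rewrite normrM ler_wpM2l //.
by rewrite -RabsE; apply/RleP; exact: HM.
Qed.

Lemma finite_pos_lower_bound {n : nat} {f : nat -> R} :
  (forall i, (i < n)%N -> 0 < f i) ->
  exists2 e, 0 < e & forall i, (i < n)%N -> e <= f i.
Proof.
elim: n => [|n IH] fpos; first by exists 1.
have [e e_gt0 le_e] := IH (fun i lt_in => fpos i (ltnW lt_in)).
exists (Num.min e (f n)); first by rewrite lt_min e_gt0 fpos.
move=> i; rewrite ltnS leq_eqVlt => /orP[/eqP ->|lt_in].
  by rewrite ge_min lexx orbT.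
by rewrite ge_min le_e.
Qed.

Section Drift.
Variables (d m : nat) (Omega : Vec d -> Prop) (v : nat -> Vec d) (idx : Vec d -> nat).
Hypothesis Omega_bounded : is_bounded Omega.
Hypothesis step_in : forall x, Omega x -> (idx x < m)%N /\ Omega (vadd x (v (idx x))).

Let F (x : Vec d) := vadd x (v (idx x)).

Lemma orbit_drift {w : Vec d} {e : R} {x0 : Vec d} :
  (forall i, (i < m)%N -> e <= dotv w (v i)) -> Omega x0 ->
  forall n, Omega (iter n F x0) /\ dotv w x0 + n%:R * e <= dotv w (iter n F x0).
Proof.
move=> le_e Ox0; elim=> [|n [On IHn]]; first by rewrite mul0r addr0.
have [lt_idx Ostep] := step_in _ On.
split=> //; rewrite iterS {1}/F dotv_vadd -addn1 natrD mulrDl mul1r.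
by have := le_e _ lt_idx; lra.
Qed.

Lemma no_drifting_functional :
  (exists x, Omega x) -> forall w : Vec d, ~ (forall i, (i < m)%N -> 0 < dotv w (v i)).
Proof.
move=> [x0 Ox0] w drift.
have [e e_gt0 le_e] := finite_pos_lower_bound drift.
have [C leC] := bounded_dotv_ub w Omega_bounded.
pose n := Num.bound ((C - dotv w x0) / e).
have lt_n : C - dotv w x0 < n%:R * e.
  rewrite -ltr_pdivrMr //; exact: le_lt_trans (ler_norm _) (unstable.ltr_norm_bound _).
have [On ge_n] := orbit_drift le_e Ox0 n.
by have := leC _ On; lra.
Qed.

End Drift.

Definition linear_relation (d : nat) (v : nat -> Vec d) (c : nat -> R) : Prop :=
  forall k : 'I_d, \sum_(i < d.+1) c i * v i k = 0.

Lemma affine_relationP (d : nat) (v : nat -> Vec d) (a : nat -> R) :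
  affine_relation d v a <-> linear_relation d v a /\ \sum_(i < d.+1) a i = 1.
Proof.
have sumE (f : nat -> R) : sum_f_R0 f d = \sum_(i < d.+1) f i.
  by rewrite sum_f_R0E big_mkord.
rewrite /affine_relation /linear_relation sumE.
by split=> -[rel ->]; split=> // k; have := rel k; rewrite sumE.
Qed.

Lemma linear_relationD {d : nat} {v : nat -> Vec d} {a b : nat -> R} :
  linear_relation d v a -> linear_relation d v b ->
  linear_relation d v (fun i => a i + b i).
Proof.
move=> rel_a rel_b k; under eq_bigr do rewrite mulrDl.
by rewrite big_split /= rel_a rel_b addr0.
Qed.

Lemma linear_relationZ {d : nat} {v : nat -> Vec d} (t : R) {c : nat -> R} :
  linear_relation d v c -> linear_relation d v (fun i => t * c i).
Proof.
move=> rel_c k; under eq_bigr do rewrite -mulrA.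
by rewrite -mulr_sumr rel_c mulr0.
Qed.

Lemma bump_lt (n j : nat) (l : 'I_n) : (bump j l < n.+1)%N.
Proof.
rewrite ltnS; apply: leq_trans _ (ltn_ord l); rewrite /bump addnC.
by case: (j <= l)%N; rewrite /= ?addn1 ?addn0.
Qed.

Lemma sum_omit {n j : nat} (f : nat -> R) : (j <= n)%N ->
  \sum_(i < n.+1) f i = f j + \sum_(l < n) f (bump j l).
Proof.
by rewrite -ltnS => lt_jn; rewrite (bigD1_ord (Ordinal lt_jn)).
Qed.

Definition omit_matrix {d : nat} (v : nat -> Vec d) (j : nat) : 'M[R]_d :=
  \matrix_(l, k) v (bump j l) k.

Definition spread {d : nat} (j : nat) (u : 'I_d -> R) (i : nat) : R :=
  \sum_(l < d | bump j l == i) u l.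

Lemma spread_at {d : nat} (j : nat) (u : 'I_d -> R) : spread j u j = 0.
Proof. by rewrite /spread big_pred0 // => l; rewrite eq_sym (negbTE (neq_bump _ _)). Qed.

Lemma spread_bump {d : nat} (j : nat) (u : 'I_d -> R) (l : 'I_d) :
  spread j u (bump j l) = u l.
Proof.
rewrite /spread (big_pred1 l) // => l' /=.
by rewrite (inj_eq (can_inj (bumpK j))).
Qed.

Lemma relation_dotv {d : nat} {v : nat -> Vec d} {c : nat -> R} (w : Vec d) :
  linear_relation d v c -> \sum_(i < d.+1) c i * dotv w (v i) = 0.
Proof.
move=> rel_c; under eq_bigr do rewrite /dotv mulr_sumr.
rewrite exchange_big big1 // => k _ /=.
by under eq_bigr do rewrite mulrCA; rewrite -mulr_sumr rel_c mulr0.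
Qed.

Section Independence.
Variables (d : nat) (v : nat -> Vec d).
Hypothesis v_indep : any_d_independent d v.

Lemma linear_relation_eq0 (c : nat -> R) (j : nat) :
  (j <= d)%N -> linear_relation d v c -> c j = 0 ->
  forall i, (i <= d)%N -> c i = 0.
Proof.
move=> le_jd rel_c cj0 i le_id; have [->//|neq_ij] := eqVneq i j.
apply: (v_indep _ le_jd) => //; last exact/eqP.
move=> k; rewrite sum_f_R0E big_mkord -[RHS](rel_c k); apply: eq_bigr => l _.
by case: Nat.eqb_spec => // ->; rewrite cj0 mul0r.
Qed.

Lemma omit_matrix_unit (j : nat) : (j <= d)%N -> omit_matrix v j \in unitmx.
Proof.
move=> le_jd; rewrite -row_free_unit; apply: inj_row_free => u uB0.
have rel : linear_relation d v (spread j (u 0)).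
  move=> k; rewrite (sum_omit (fun i => _ i * v i k) le_jd) spread_at mul0r add0r.
  transitivity ((u *m omit_matrix v j) 0 k); last by rewrite uB0 mxE.
  by rewrite mxE; apply: eq_bigr => l _; rewrite spread_bump mxE.
apply/rowP => l; rewrite mxE -(spread_bump j).
exact: linear_relation_eq0 le_jd rel (spread_at _ _) _ (bump_lt _ _ _).
Qed.

Lemma exists_functional_omit (j : nat) : (j <= d)%N ->
  exists w : Vec d, forall i, (i <= d)%N -> i != j -> dotv w (v i) = 1.
Proof.
move=> le_jd; pose x := invmx (omit_matrix v j) *m const_mx 1 : 'cV[R]_d.
exists (fun k => x k 0) => i le_id neq_ij.
have lt_unbump : (unbump j i < d)%N.
  by move: neq_ij; rewrite /unbump; case: ltnP => /=; lia.
rewrite -(unbumpK neq_ij) -[bump j _]/(bump j (Ordinal lt_unbump)).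
have := mulKVmx (omit_matrix_unit j le_jd) (const_mx 1 : 'cV[R]_d).
move/(congr1 (fun M : 'cV[R]_d => M (Ordinal lt_unbump) 0)); rewrite !mxE => <-.
by rewrite /dotv; apply: eq_bigr => k _; rewrite [omit_matrix _ _ _ _]mxE mulrC.
Qed.

Lemma exists_relation_at (j : nat) : (j <= d)%N ->
  exists2 c, linear_relation d v c & c j = -1.
Proof.
move=> le_jd; pose beta := (\row_k v j k) *m invmx (omit_matrix v j).
pose c i := if i == j then -1 else spread j (beta 0) i.
exists c => [k|]; last by rewrite /c eqxx.
rewrite (sum_omit (fun i => c i * v i k) le_jd) /c eqxx mulN1r.
have -> : v j k = (beta *m omit_matrix v j) 0 k by rewrite mulmxKV ?omit_matrix_unit ?mxE.
rewrite addrC; apply/eqP; rewrite subr_eq0 mxE; apply/eqP/eq_bigr => l _.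
by rewrite eq_sym (negbTE (neq_bump _ _)) spread_bump [omit_matrix _ _ _ _]mxE.
Qed.

Lemma relation_proportional (c e : nat -> R) (j : nat) :
  (j <= d)%N -> linear_relation d v c -> c j = -1 -> linear_relation d v e ->
  forall i, (i <= d)%N -> e i = - e j * c i.
Proof.
move=> le_jd rel_c cj rel_e i le_id; apply/eqP; rewrite -subr_eq0 mulNr opprK.
apply/eqP; apply: (linear_relation_eq0 (fun i => e i + e j * c i) j le_jd _ _ i le_id).
  exact: linear_relationD rel_e (linear_relationZ (e j) rel_c).
by rewrite cj mulrN1 subrr.
Qed.

Lemma affine_relation_unique (c a b : nat -> R) (j : nat) :
  (j <= d)%N -> linear_relation d v c -> c j = -1 -> \sum_(i < d.+1) c i != 0 ->
  affine_relation d v a -> affine_relation d v b ->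
  forall i, (i <= d)%N -> b i = a i.
Proof.
move=> le_jd rel_c cj sum_c /affine_relationP[rel_a sum_a] /affine_relationP[rel_b sum_b].
pose e i := b i + (-1) * a i.
have rel_e : linear_relation d v e.
  exact: linear_relationD rel_b (linear_relationZ (-1) rel_a).
have e_prop := relation_proportional c e j le_jd rel_c cj rel_e.
have ej0 : e j = 0.
  have : \sum_(i < d.+1) e i = - e j * \sum_(i < d.+1) c i.
    rewrite mulr_sumr; apply: eq_bigr => i _; exact: e_prop (ltn_ord i).
  rewrite big_split /= -mulr_sumr sum_a sum_b mulN1r subrr => /esym /eqP.
  by rewrite mulf_eq0 (negbTE sum_c) orbF oppr_eq0 => /eqP.
move=> i le_id; apply/eqP; rewrite -subr_eq0 -mulN1r.
by rewrite -/(e i) e_prop // ej0 oppr0 mul0r.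
Qed.

End Independence.

Section Positivity.
Variables (d : nat) (v : nat -> Vec d).
Hypothesis v_indep : any_d_independent d v.
Hypothesis no_drift : forall w : Vec d, ~ (forall i, (i < d.+1)%N -> 0 < dotv w (v i)).

Lemma relation_sum_factor (c : nat -> R) (j : nat) :
  (j <= d)%N -> linear_relation d v c ->
  exists2 t, 1 <= t & \sum_(i < d.+1) c i = c j * t.
Proof.
move=> le_jd rel_c; have [w w1] := exists_functional_omit d v v_indep j le_jd.
have le0 : dotv w (v j) <= 0.
  rewrite leNgt; apply/negP => gt0; apply: (no_drift w) => i lt_id.
  by have [->|neq_ij] := eqVneq i j; rewrite // w1 ?ltr01.
exists (1 - dotv w (v j)); first lra.
have w1_bump (l : 'I_d) : dotv w (v (bump j l)) = 1.
  by apply: w1; [exact: bump_lt | rewrite eq_sym neq_bump].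
have := relation_dotv w rel_c.
rewrite (sum_omit (fun i => c i * dotv w (v i)) le_jd) (sum_omit c le_jd).
under eq_bigr do rewrite w1_bump mulr1.
lra.
Qed.

End Positivity.

Lemma piecewise_translation_no_drift {d m : nat} {Omega : Vec d -> Prop}
    {P : nat -> Vec d -> Prop} {v : nat -> Vec d} {idx : Vec d -> nat} :
  piecewise_translation d m Omega P v idx -> (exists x, Omega x) ->
  forall w : Vec d, ~ (forall i, (i < m)%N -> 0 < dotv w (v i)).
Proof.
move=> [[[_ Omega_bounded] _] [_ [_ [_ [_ [branch_in idx_in]]]]]].
apply: (no_drifting_functional d m Omega v idx Omega_bounded) => x Ox.
by have [lt_idx P_idx] := idx_in x Ox; split; last exact: branch_in.
Qed.

(* After importing MathComp the key %R denotes ring_scope; the statement below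
   is read with the Stdlib meaning of (_ < _)%R. *)
Delimit Scope R_scope with R.

Theorem proposition2p5 (d : nat) (Omega : Vec d -> Prop)
    (P : nat -> Vec d -> Prop) (v : nat -> Vec d) (idx : Vec d -> nat) :
  piecewise_translation d (d.+1) Omega P v idx ->
  (exists x, Omega x) ->
  any_d_independent d v ->
  exists a : nat -> R,
    affine_relation d v a /\
    (forall i, (i <= d)%nat -> (0 < a i)%R) /\
    (forall b : nat -> R, affine_relation d v b ->
       forall i, (i <= d)%nat -> b i = a i).
Proof.
move=> pt nonempty v_indep.
have factor := relation_sum_factor d v v_indep (piecewise_translation_no_drift pt nonempty).
have [c rel_c c0] := exists_relation_at d v v_indep 0 (leq0n d).
pose s := \sum_(i < d.+1) c i.
have s_neq0 : s != 0.
  have [t ge1_t s_eq] := factor c 0%N (leq0n d) rel_c.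
  by apply/eqP; rewrite /s s_eq c0; lra.
pose a i := s^-1 * c i.
have aff_a : affine_relation d v a.
  by apply/affine_relationP; split; [exact: linear_relationZ | rewrite -mulr_sumr mulVf].
exists a; split; [exact: aff_a | split].
- move=> i le_id; apply/RltP; rewrite R0E.
  have [t ge1_t s_eq] := factor c i le_id rel_c.
  have ci_neq0 : c i != 0 by apply: contraNneq s_neq0; rewrite /s s_eq => ->; rewrite mul0r.
  by rewrite /a /s s_eq invfM mulrAC mulVf // mul1r invr_gt0; lra.
- move=> b aff_b i le_id.
  exact: affine_relation_unique d v v_indep c a b 0 (leq0n d) rel_c c0 s_neq0 aff_a aff_b i le_id.
Qed.
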